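(* Let $k$ be an arbitrary field, $Q$ a finitely generated commutative monoid, $I\subseteq k[Q]$ a binomial ideal, and $\mathfrak p=I_{\sigma,P}$ a binomial prime ideal of $k[Q]$ (with $P\subset Q$ a prime ideal and $\sigma$ a character on a subgroup of $G_P$). Then the kernel of the natural homomorphism from $k[Q]$ to the ordinary localization $(k[Q]/I)_{\mathfrak p}$ contains the binomial localization $I+M_\infty^P(I)+M_\sigma^P(I)$.
   Context: $k[Q]=\bigoplus_q k\,t^q$; binomial ideals generated by $t^p-\lambda t^q$; $\sim_I$: $p\sim_I q$ iff $t^p-\lambda t^q\in I$ for some $\lambda\in k^*$. Prime ideals $P$ of $Q$ ($\varnothing$ prime iff $Q$ has no nil); $Q_P$ the localization (differences $a-u$, $u\notin P$), $G_P$ its unit group, $k[Q]_P=k[Q_P]$, $I_P=Ik[Q]_P$, $\mathfrak m_P=\langle t^p:p\in P_P\rangle$; $\bar Q_P$ the localization of $Q/\sim_I$ at the image of $Q\setminus P$. For $K\subseteq G_P$ and $\rho:K\to k^*$: $I_\rho=\langle t^{g+v}-\rho(g)t^v: g\in K,v\in Q_P\rangle\subseteq k[Q]_P$, $I_{\rho,P}$ = preimage in $k[Q]$ of $I_\rho+\mathfrak m_P$. For $q\in Q$ with $t^q\notin I_P$: $K_q^P=\{g\in G_P:\overline{g+q}=\bar q\text{ in }\bar Q_P\}$ and the character of $I_P$ at $q$ is $\rho_q^P:K_q^P\to k^*$ with $(I_P:t^q)+\mathfrak m_P=I_{\rho_q^P}+\mathfrak m_P$. The \emph{$P$-infinite ideal}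 $M_\infty^P(I)\subseteq k[Q]$ is generated by monomials $t^q$ such that $\overline{q+p}=\bar q$ in $\bar Q_P$ for some $p\in P$. The \emph{incommensurate ideal} $M_\sigma^P(I)$ is spanned over $k$ by the monomials $t^q$ with $t^q\notin I_P$ such that $\rho_q^P$ is not a restriction of $\sigma$ (i.e. either $K_q^P\not\subseteq$ domain of $\sigma$, or $\rho_q^P\neq\sigma|_{K_q^P}$), together with those $t^q\in I_P$. *)

(* Monoid algebras k[M] are modelled as finite formal sums
   (seq (k * M)), with equality "peq r" = equality of all coefficients, where
   r is the equality relation of the monoid M (Leibniz equality for Q, the
   localization congruence for Q_P). *)
From HB Require Import structures.
From mathcomp Require Import all_boot all_order all_algebra.
From Stdlib Require Import ClassicalEpsilon.
Set Implicit Arguments. Unset Strict Implicit. Unset Printing Implicit Defensive.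
Import GRing.Theory.
Local Open Scope ring_scope.

Definition cl (A : Prop) : bool :=
  if excluded_middle_informative A then true else false.

Section MonoidAlgebra.
Variables (k : fieldType) (M : Type).

Definition mpoly := seq (k * M).

Definition coef (r : M -> M -> Prop) (f : mpoly) (m : M) : k :=
  \sum_(x <- f) (if cl (r x.2 m) then x.1 else 0).

Definition peq r (f g : mpoly) := forall m, coef r f m = coef r g m.

Definition pmul (add : M -> M -> M) (f g : mpoly) : mpoly :=
  [seq (x.1 * y.1, add x.2 y.2) | x <- f, y <- g].

Definition mono (c : k) (m : M) : mpoly := [:: (c, m)].

Definition binom (p q : M) (c : k) : mpoly := [:: (1, p); (- c, q)].

Definition gen_ideal r add (D S : mpoly -> Prop) (f : mpoly) : Prop :=
  D f /\ exists l : seq (mpoly * mpoly),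
    (forall x, List.In x l -> D x.1 /\ S x.2) /\
    peq r f (flatten [seq pmul add x.1 x.2 | x <- l]).

Definition isum r (D J1 J2 : mpoly -> Prop) (f : mpoly) : Prop :=
  D f /\ exists f1 f2, J1 f1 /\ J2 f2 /\ peq r f (f1 ++ f2).

Definition kspan r (A : M -> Prop) (f : mpoly) : Prop :=
  exists l : mpoly, (forall x, List.In x l -> A x.2) /\ peq r f l.

End MonoidAlgebra.

Section MonoidQ.
Variables (k : fieldType) (Q : nmodType).

Definition fin_gen := exists gens : seq Q, forall q : Q,
  exists l : seq Q, (forall x, List.In x l -> List.In x gens) /\ q = \sum_(x <- l) x.

(* prime ideal of Q; by the paper's convention a nil (absorbing element)
   lies in every prime ideal, so the empty set is prime iff Q has no nil *)
Definition prime_mideal (P : Q -> Prop) :=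
  (exists q, ~ P q) /\
  (forall p q, P p -> P (p + q)) /\
  (forall p q, P (p + q) -> P p \/ P q) /\
  (forall z, (forall q, z + q = z) -> P z).

Definition qeq (f g : mpoly k Q) := peq (@eq Q) f g.
Definition qmul (f g : mpoly k Q) := pmul (@GRing.add Q) f g.

Definition is_ideal (J : mpoly k Q -> Prop) :=
  (forall f g, qeq f g -> J f -> J g) /\ J [::] /\
  (forall f g, J f -> J g -> J (f ++ g)) /\
  (forall f g, J g -> J (qmul f g)).

Definition prime_ideal (J : mpoly k Q -> Prop) :=
  is_ideal J /\ ~ J (mono 1 0) /\ forall f g, J (qmul f g) -> J f \/ J g.

Definition binomial_ideal (I : mpoly k Q -> Prop) :=
  exists B : Q -> Q -> k -> Prop, forall f : mpoly k Q,
    I f <-> gen_ideal (@eq Q) (@GRing.add Q) (fun _ => True)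
              (fun g => exists p q c, B p q c /\ g = binom p q c) f.

Definition simI (I : mpoly k Q -> Prop) (p q : Q) :=
  exists c : k, c != 0 /\ I (binom p q c).

(* ---- the localization Q_P : pairs (a,u) stand for a - u, u not in P ---- *)
Definition locr (P : Q -> Prop) (x y : Q * Q) :=
  exists w, ~ P w /\ x.1 + y.2 + w = y.1 + x.2 + w.
Definition locadd (x y : Q * Q) : Q * Q := (x.1 + y.1, x.2 + y.2).

Definition GP (P : Q -> Prop) (g : Q * Q) :=
  ~ P g.2 /\ exists h : Q * Q, ~ P h.2 /\ locr P (locadd g h) (0, 0).

(* ---- the ring k[Q]_P = k[Q_P] ---- *)
Definition kQP_dom (P : Q -> Prop) (f : mpoly k (Q * Q)) :=
  forall x, List.In x f -> ~ P x.2.2.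
Definition toP (f : mpoly k Q) : mpoly k (Q * Q) := [seq (x.1, (x.2, 0)) | x <- f].
Definition locideal (P : Q -> Prop) (S : mpoly k (Q * Q) -> Prop) :=
  gen_ideal (locr P) locadd (kQP_dom P) S.
Definition locsum (P : Q -> Prop) (J1 J2 : mpoly k (Q * Q) -> Prop) :=
  isum (locr P) (kQP_dom P) J1 J2.

Definition IP (I : mpoly k Q -> Prop) (P : Q -> Prop) :=
  locideal P (fun g => exists f, I f /\ g = toP f).
Definition mP (P : Q -> Prop) :=
  locideal P (fun g => exists a u, P a /\ ~ P u /\ g = mono 1 (a, u)).
Definition Irho (P : Q -> Prop) (K : Q * Q -> Prop) (rho : Q * Q -> k) :=
  locideal P (fun g => exists h v, K h /\ ~ P v.2 /\
                                   g = binom (locadd h v) v (rho h)).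
Definition colon (P : Q -> Prop) (J : mpoly k (Q * Q) -> Prop) (q : Q)
    (f : mpoly k (Q * Q)) :=
  kQP_dom P f /\ J (pmul locadd (mono 1 (q, 0)) f).

Definition is_character (P : Q -> Prop) (K : Q * Q -> Prop) (rho : Q * Q -> k) :=
  (forall g, K g -> GP P g) /\
  (forall g h, K g -> ~ P h.2 -> locr P g h -> K h /\ rho g = rho h) /\
  K (0, 0) /\
  (forall g h, K g -> K h -> K (locadd g h)) /\
  (forall g, K g -> K (g.2, g.1)) /\
  (forall g, K g -> rho g != 0) /\
  (forall g h, K g -> K h -> rho (locadd g h) = rho g * rho h).

(* equality in \bar Q_P of the images of x, y in Q_P *)
Definition barr (I : mpoly k Q -> Prop) (P : Q -> Prop) (x y : Q * Q) :=
  exists w, ~ P w /\ simI I (x.1 + y.2 + w) (y.1 + x.2 + w).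

Definition Kq (I : mpoly k Q -> Prop) (P : Q -> Prop) (q : Q) (g : Q * Q) :=
  GP P g /\ barr I P (locadd g (q, 0)) (q, 0).

Definition char_at (I : mpoly k Q -> Prop) (P : Q -> Prop) (q : Q) (rho : Q * Q -> k) :=
  is_character P (Kq I P q) rho /\
  forall f, kQP_dom P f ->
    (locsum P (colon P (IP I P) q) (mP P) f <->
     locsum P (Irho P (Kq I P q) rho) (mP P) f).

Definition restricts (K : Q * Q -> Prop) (sigma : Q * Q -> k)
    (K' : Q * Q -> Prop) (rho : Q * Q -> k) :=
  (forall g, K' g -> K g) /\ (forall g, K' g -> rho g = sigma g).

Definition Minf (I : mpoly k Q -> Prop) (P : Q -> Prop) :=
  gen_ideal (@eq Q) (@GRing.add Q) (fun _ => True)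
    (fun g : mpoly k Q => exists q p, P p /\ barr I P (q + p, 0) (q, 0) /\ g = mono 1 q).

Definition Msig (I : mpoly k Q -> Prop) (P : Q -> Prop)
    (K : Q * Q -> Prop) (sigma : Q * Q -> k) : mpoly k Q -> Prop :=
  kspan (@eq Q) (fun q =>
     IP I P (mono 1 (q, 0)) \/
     (~ IP I P (mono 1 (q, 0)) /\
      exists rho, char_at I P q rho /\ ~ restricts K sigma (Kq I P q) rho)).

(* the binomial prime I_{sigma,P}: preimage of I_sigma + m_P *)
Definition IsigP (P : Q -> Prop) (K : Q * Q -> Prop) (sigma : Q * Q -> k)
    (f : mpoly k Q) :=
  locsum P (Irho P K sigma) (mP P) (toP f).

Definition binloc (I : mpoly k Q -> Prop) (P : Q -> Prop)
    (K : Q * Q -> Prop) (sigma : Q * Q -> k) (f : mpoly k Q) :=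
  exists f1 f2 f3, I f1 /\ Minf I P f2 /\ Msig I P K sigma f3 /\
                   qeq f (f1 ++ f2 ++ f3).

(* kernel of k[Q] -> (k[Q]/I)_pp : f/1 = 0 iff s f in I for some s not in pp *)
Definition loc_kernel (I pp : mpoly k Q -> Prop) (f : mpoly k Q) :=
  exists s, ~ pp s /\ I (qmul s f).

End MonoidQ.

From HB Require Import structures.
From mathcomp Require Import all_boot all_order all_algebra.
From Stdlib Require Import Classical ClassicalEpsilon.
Set Implicit Arguments. Unset Strict Implicit. Unset Printing Implicit Defensive.
Import GRing.Theory.
Local Open Scope ring_scope.

(* The kernel N of k[Q] -> (k[Q]/I)_pp contains I and, pp being prime, is an
   ideal, so it suffices to show that the generators of the summands lie in N:
   - a generator t^q of M_inf (q + p ~ q in the localization) is killed by a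
     binomial t^(p+w) - c t^w, which lies outside pp;
   - for a monomial t^q of M_sigma we find c in (I_P : t^q) with psi0(c) <> 0,
     namely c = 1 if t^q is in I_P, and otherwise the (I_P : t^q)-part of
     t^g - rho(g), where g shows that rho = rho_q^P does not restrict sigma;
     clearing the denominators of c and of t^q c gives s outside pp with
     s t^q in I. *)

Lemma clT (A : Prop) : A -> cl A = true.
Proof. by rewrite /cl; case: excluded_middle_informative. Qed.

Lemma clF (A : Prop) : ~ A -> cl A = false.
Proof. by rewrite /cl; case: excluded_middle_informative. Qed.

Lemma clP (A : Prop) : cl A = true <-> A.
Proof. by rewrite /cl; case: excluded_middle_informative. Qed.

Lemma cl_iff (A B : Prop) : (A <-> B) -> cl A = cl B.
Proof.
move=> AB; case: (classic A) => a; first by rewrite !clT //; apply/AB.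
by rewrite !clF // => /AB.
Qed.

Lemma In_cat (T : Type) (x : T) (s1 s2 : seq T) :
  List.In x (s1 ++ s2) <-> List.In x s1 \/ List.In x s2.
Proof. by elim: s1 => [|y s IH] /=; [split; [right|case]|rewrite IH; tauto]. Qed.

Lemma In_flatten (T : Type) (x : T) (L : seq (seq T)) :
  List.In x (flatten L) -> exists2 s, List.In s L & List.In x s.
Proof.
elim: L => [|s L IH] //= /In_cat [xs|/IH [s' s'L xs']]; first by exists s; [left|].
by exists s'; [right|].
Qed.

Lemma In_map (T U : Type) (f : T -> U) (y : U) (s : seq T) :
  List.In y [seq f x | x <- s] -> exists2 x, List.In x s & y = f x.
Proof.
elim: s => [|x s IH] //= [<-|/IH [z zs ->]]; first by exists x; [left|].
by exists z; [right|].
Qed.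

Lemma In_filter (T : Type) (p : pred T) (x : T) (s : seq T) :
  List.In x (filter p s) -> List.In x s /\ p x.
Proof.
elim: s => [|y s IH] //=; case: ifP => py /=; last by move/IH=> [? ?]; split; [right|].
by case=> [<-|/IH [? ?]]; split=> //; [left|right].
Qed.

Lemma In_pmul (k : fieldType) (M : Type) (add : M -> M -> M) (F G : mpoly k M) z :
  List.In z (pmul add F G) -> exists x y, [/\ List.In x F, List.In y G &
     z = (x.1 * y.1, add x.2 y.2)].
Proof.
rewrite /pmul => h; have [s sFG zs] := In_flatten h.
have [x xF es] := In_map sFG; rewrite {s sFG}es in zs.
by have [y yG ->] := In_map zs; exists x, y.
Qed.

(* The pairing of a formal sum with a weight function psi : M -> k, i.e. the
   value at F of the linear form on k[M] with t^m |-> psi m. *)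
Definition weigh {k : fieldType} {M : Type} (psi : M -> k) (F : mpoly k M) : k :=
  \sum_(x <- F) x.1 * psi x.2.

Definition ind {k : fieldType} {M : Type} (r : M -> M -> Prop) (m : M) : M -> k :=
  fun y => if cl (r y m) then 1 else 0.

Section Weights.
Variables (k : fieldType) (M : Type).
Implicit Types (F G : mpoly k M) (psi : M -> k).

Lemma coef_weigh r F m : coef r F m = weigh (ind r m) F.
Proof.
by apply: eq_bigr => x _; rewrite /ind; case: cl; rewrite ?mulr1 ?mulr0.
Qed.

Lemma weigh_nil psi : weigh psi [::] = 0.
Proof. exact: big_nil. Qed.

Lemma weigh_cons psi x F : weigh psi (x :: F) = x.1 * psi x.2 + weigh psi F.
Proof. exact: big_cons. Qed.

Lemma weigh_cat psi F G : weigh psi (F ++ G) = weigh psi F + weigh psi G.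
Proof. exact: big_cat. Qed.

Lemma weigh_flatten psi (L : seq (mpoly k M)) :
  weigh psi (flatten L) = \sum_(F <- L) weigh psi F.
Proof. exact: big_flatten. Qed.

Lemma weigh_mono psi c m : weigh psi (mono c m) = c * psi m.
Proof. by rewrite /weigh big_seq1. Qed.

Lemma weigh_zero F : weigh (fun _ => 0) F = 0.
Proof. by rewrite /weigh big1 // => x _; rewrite mulr0. Qed.

Lemma weigh_const c F : weigh (fun _ => c) F = c * weigh (fun _ => 1) F.
Proof. by rewrite /weigh big_distrr; apply: eq_bigr => x _; rewrite mulr1 mulrC. Qed.

Lemma weigh_neg psi F : weigh psi [seq (- x.1, x.2) | x <- F] = - weigh psi F.
Proof. by rewrite /weigh big_map -sumrN; apply: eq_bigr => x _; rewrite mulNr. Qed.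

Lemma weigh_on psi psi' F : (forall y, List.In y F -> psi y.2 = psi' y.2) ->
  weigh psi F = weigh psi' F.
Proof.
elim: F => [|x F IH] h; first by rewrite !weigh_nil.
by rewrite !weigh_cons h ?IH //; [move=> y yF; apply: h; right|left].
Qed.

Lemma weigh_ext psi psi' F : psi =1 psi' -> weigh psi F = weigh psi' F.
Proof. by move=> h; apply: weigh_on. Qed.

Lemma weigh_filter psi (p : pred (k * M)) F :
  weigh psi F = weigh psi (filter p F) + weigh psi (filter (predC p) F).
Proof.
elim: F => [|x F IH] /=; first by rewrite !weigh_nil addr0.
by case: (p x); rewrite /= !weigh_cons IH; [rewrite addrA|rewrite addrCA].
Qed.

Lemma weigh_Forall2 (N : Type) psi (chi : N -> k) F (G : mpoly k N) :
  List.Forall2 (fun x y => x.1 = y.1 /\ psi x.2 = chi y.2) F G ->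
  weigh psi F = weigh chi G.
Proof.
elim=> [|x y F' G' [e1 e2] _ IH]; first by rewrite /weigh !big_nil.
by rewrite /weigh !big_cons e1 e2 -!/(weigh _ _) IH.
Qed.

Lemma weigh_pmul add psi F G :
  weigh psi (pmul add F G) = weigh (fun a => weigh (fun b => psi (add a b)) G) F.
Proof.
rewrite /weigh /pmul big_allpairs_dep /=; apply: eq_bigr => x _.
by rewrite big_distrr; apply: eq_bigr => y _ /=; rewrite mulrA.
Qed.

Lemma weigh_pmul_catr add psi (a F G : mpoly k M) :
  weigh psi (pmul add a (F ++ G)) =
  weigh psi (pmul add a F) + weigh psi (pmul add a G).
Proof.
rewrite !weigh_pmul /weigh -big_split; apply: eq_bigr => x _ /=.
by rewrite -mulrDr -big_cat.
Qed.

Lemma weigh_pmulA add (addA : associative add) psi (a b c : mpoly k M) :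
  weigh psi (pmul add (pmul add a b) c) = weigh psi (pmul add a (pmul add b c)).
Proof.
rewrite !weigh_pmul; apply: weigh_ext => x; rewrite weigh_pmul.
by apply: weigh_ext => y; apply: weigh_ext => z; rewrite addA.
Qed.

End Weights.

Lemma weigh_exch (k : fieldType) (M N : Type) (chi : M -> N -> k)
  (F : mpoly k M) (G : mpoly k N) :
  weigh (fun a => weigh (chi a) G) F = weigh (fun b => weigh (chi^~ b) F) G.
Proof.
rewrite /weigh; under eq_bigr do rewrite big_distrr.
rewrite exchange_big; apply: eq_bigr => y _; rewrite big_distrr.
by apply: eq_bigr => x _ /=; rewrite mulrCA.
Qed.

Lemma weigh_pmulC (k : fieldType) (M : Type) (add : M -> M -> M)
  (addC : commutative add) psi (a b : mpoly k M) :
  weigh psi (pmul add a b) = weigh psi (pmul add b a).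
Proof.
rewrite !weigh_pmul weigh_exch; apply: weigh_ext => x; apply: weigh_ext => y.
by rewrite addC.
Qed.

(* Coefficient equality w.r.t. an equivalence r on a domain A implies
   equality of all r-invariant weights: both sides expand as
   sum_m psi m * coef r _ m over a system of representatives m. *)
Section CoefficientsDetermineWeights.
Variables (k : fieldType) (M : Type) (r : M -> M -> Prop) (A : M -> Prop).
Hypotheses (r_refl : forall x, r x x) (r_sym : forall x y, r x y -> r y x)
  (r_trans : forall x y z, A y -> r x y -> r y z -> r x z).
Implicit Types (F G : mpoly k M) (psi : M -> k).

Fixpoint apart (L : seq M) : Prop :=
  if L is m :: L' then (forall m', List.In m' L' -> ~ r m m') /\ apart L' else True.

Definition represents (L : seq M) F :=
  [/\ forall m, List.In m L -> A m, apart L &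
      forall x, List.In x F -> exists2 m, List.In m L & r x.2 m].

Lemma represents_exists F : (forall x, List.In x F -> A x.2) ->
  exists L, represents L F.
Proof.
elim: F => [|x F IH] AF; first by exists [::].
have [L [AL apL repL]] := IH (fun y yF => AF y (or_intror yF)).
case: (classic (exists2 m, List.In m L & r x.2 m)) => [xL|xnL].
  by exists L; split=> // y [<-|/repL].
exists (x.2 :: L); split.
- by move=> m [<-|/AL]; [apply: AF; left|].
- by split=> // m mL xm; apply: xnL; exists m.
move=> y [<-|/repL [m mL ym]]; first by exists x.2; [left|].
by exists m; [right|].
Qed.

Lemma sum_class_apart psi a c L : (forall m, List.In m L -> ~ r a m) ->
  \sum_(m <- L) psi m * (if cl (r a m) then c else 0) = 0.
Proof.
elim: L => [|m L IH] h; first by rewrite big_nil.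
rewrite big_cons clF; last by apply: h; left.
by rewrite mulr0 add0r IH // => m' m'L; apply: h; right.
Qed.

Lemma sum_class_rep psi (psiI : forall x y, A x -> A y -> r x y -> psi x = psi y)
  a c L : A a -> (forall m, List.In m L -> A m) -> apart L ->
  (exists2 m, List.In m L & r a m) ->
  \sum_(m <- L) psi m * (if cl (r a m) then c else 0) = c * psi a.
Proof.
move=> Aa; elim: L => [|m L IH] AL apL ex_m; first by case: ex_m.
rewrite big_cons; case: (classic (r a m)) => [am|nam].
  rewrite (clT am) (sum_class_apart psi c (L := L)).
    by rewrite addr0 (psiI a m) 1?mulrC //; apply: AL; left.
  move=> m' m'L am'; apply: (proj1 apL m' m'L).
  exact: r_trans Aa (r_sym am) am'.
rewrite (clF nam) mulr0 add0r IH //; first by move=> m' m'L; apply: AL; right.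
  exact: proj2 apL.
by case: ex_m => m0 [e|m0L] am0; [subst m0|exists m0].
Qed.

Lemma weigh_by_reps psi (psiI : forall x y, A x -> A y -> r x y -> psi x = psi y)
  L F : (forall x, List.In x F -> A x.2) -> represents L F ->
  weigh psi F = \sum_(m <- L) psi m * coef r F m.
Proof.
move=> AF [AL apL]; elim: F AF => [|x F IH] AF repF.
  by rewrite weigh_nil big1 // => m _; rewrite /coef big_nil mulr0.
rewrite weigh_cons /coef; under eq_bigr do rewrite big_cons mulrDr.
rewrite big_split /= sum_class_rep //; first last.
- exact: repF x (or_introl erefl).
- exact: AF x (or_introl erefl).
rewrite [x.1 * _]mulrC IH // => [y yF|y yF]; first exact: AF y (or_intror yF).
exact: repF y (or_intror yF).
Qed.

Lemma peq_weigh psi (psiI : forall x y, A x -> A y -> r x y -> psi x = psi y) F G :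
  (forall x, List.In x F -> A x.2) -> (forall x, List.In x G -> A x.2) ->
  peq r F G -> weigh psi F = weigh psi G.
Proof.
move=> AF AG FG.
have AFG x : List.In x (F ++ G) -> A x.2 by case/In_cat => [/AF|/AG].
have [L [AL apL repL]] := represents_exists AFG.
rewrite (@weigh_by_reps psi psiI L F) ?(@weigh_by_reps psi psiI L G) //.
- by apply: eq_bigr => m _; rewrite FG.
- by split=> // x xG; apply: repL; apply/In_cat; right.
- by split=> // x xF; apply: repL; apply/In_cat; left.
Qed.

End CoefficientsDetermineWeights.

(* In k[Q] equality (qeq) is equality of all weights, so the commutative
   ring laws hold up to qeq. *)
Section KQ.
Variables (k : fieldType) (Q : nmodType).
Implicit Types (f g h a s : mpoly k Q).

Lemma qeq_weigh f g : qeq f g -> forall psi, weigh psi f = weigh psi g.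
Proof.
move=> fg psi; apply: (@peq_weigh k Q (@eq Q) (fun _ => True)) => //.
- by move=> x y z _ -> ->.
- by move=> x y _ _ ->.
Qed.

Lemma qeqP f g : (forall psi, weigh psi f = weigh psi g) -> qeq f g.
Proof. by move=> fg m; rewrite !coef_weigh fg. Qed.

Lemma weigh_monomul psi m f :
  weigh psi (qmul (mono 1 m) f) = weigh (fun y => psi (m + y)) f.
Proof. by rewrite weigh_pmul weigh_mono mul1r. Qed.

Lemma qeq_sym f g : qeq f g -> qeq g f.
Proof. by move=> fg m; rewrite fg. Qed.

Lemma qeq_trans f g h : qeq f g -> qeq g h -> qeq f h.
Proof. by move=> fg gh m; rewrite fg gh. Qed.

Lemma qeq_cat f f' g g' : qeq f f' -> qeq g g' -> qeq (f ++ g) (f' ++ g').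
Proof.
by move=> ff' gg'; apply: qeqP => psi; rewrite !weigh_cat (qeq_weigh ff') (qeq_weigh gg').
Qed.

Lemma qmul_qeqr a g g' : qeq g g' -> qeq (qmul a g) (qmul a g').
Proof.
move=> gg'; apply: qeqP => psi; rewrite !weigh_pmul.
by apply: weigh_ext => x; apply: qeq_weigh.
Qed.

Lemma qmul_qeql a g g' : qeq g g' -> qeq (qmul g a) (qmul g' a).
Proof. by move=> gg'; apply: qeqP => psi; rewrite !weigh_pmul; apply: qeq_weigh. Qed.

Lemma qmulC a b : qeq (qmul a b) (qmul b a).
Proof. by apply: qeqP => psi; apply: weigh_pmulC; exact: addrC. Qed.

Lemma qmulA a b c : qeq (qmul (qmul a b) c) (qmul a (qmul b c)).
Proof. by apply: qeqP => psi; apply: weigh_pmulA; exact: addrA. Qed.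

Lemma qmul_catr a f g : qeq (qmul a (f ++ g)) (qmul a f ++ qmul a g).
Proof. by apply: qeqP => psi; rewrite weigh_cat weigh_pmul_catr. Qed.

Lemma qmul_flattenr a (L : seq (mpoly k Q)) :
  qeq (qmul a (flatten L)) (flatten [seq qmul a f | f <- L]).
Proof.
elim: L => [|f L IH].
  apply: qeqP => psi; rewrite weigh_pmul weigh_nil -[RHS](weigh_zero a).
  by apply: weigh_ext => x; exact: weigh_nil.
by apply: qeq_trans (qmul_catr a f (flatten L)) _; apply: qeq_cat.
Qed.

Lemma binomial_is_ideal (I : mpoly k Q -> Prop) : binomial_ideal I -> is_ideal I.
Proof.
case=> B HB; split; [|split; [|split]].
- move=> f g fg /HB [_ [l [gens e]]]; apply/HB; split=> //; exists l; split=> //.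
  by move=> m; rewrite -fg e.
- by apply/HB; split=> //; exists [::].
- move=> f g /HB [_ [l1 [gens1 e1]]] /HB [_ [l2 [gens2 e2]]]; apply/HB; split=> //.
  exists (l1 ++ l2); split; first by move=> x /In_cat [/gens1|/gens2].
  by rewrite map_cat flatten_cat; apply: qeq_cat.
- move=> f g /HB [_ [l [gens e]]]; apply/HB; split=> //.
  exists [seq (qmul f x.1, x.2) | x <- l]; split.
    move=> x xl; have [y yl ->] := In_map xl.
    by split=> //; exact: proj2 (gens y yl).
  apply: qeq_trans (qmul_qeqr f e) _; apply: qeq_trans (qmul_flattenr _ _) _.
  rewrite -!map_comp; apply: qeqP => psi; rewrite !weigh_flatten !big_map.
  by apply: eq_bigr => x _ /=; apply: qeq_weigh; apply: qeq_sym; exact: qmulA.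
Qed.

Section LocalizationKernel.
Variables (I pp : mpoly k Q -> Prop).
Hypotheses (HI : binomial_ideal I) (Hpp : prime_ideal pp).

Let II := binomial_is_ideal HI.

Lemma I_qeq f g : qeq f g -> I f -> I g. Proof. exact: (proj1 II). Qed.
Lemma I_nil : I [::]. Proof. exact: (proj1 (proj2 II)). Qed.
Lemma I_cat f g : I f -> I g -> I (f ++ g). Proof. exact: (proj1 (proj2 (proj2 II))). Qed.
Lemma I_mul f g : I g -> I (qmul f g). Proof. exact: (proj2 (proj2 (proj2 II))). Qed.

Lemma notin_prime_mul s t : ~ pp s -> ~ pp t -> ~ pp (qmul s t).
Proof. by move=> ns nt /(proj2 (proj2 Hpp)) [/ns|/nt]. Qed.

Lemma kernel_qeq g g' : qeq g g' -> loc_kernel I pp g -> loc_kernel I pp g'.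
Proof.
by move=> gg' [s [ns sg]]; exists s; split=> //; apply: I_qeq sg; apply: qmul_qeqr.
Qed.

Lemma kernel_I g : I g -> loc_kernel I pp g.
Proof.
by move=> Ig; exists (mono 1 0); split; [exact: (proj1 (proj2 Hpp))|apply: I_mul].
Qed.

Lemma kernel_mul a g : loc_kernel I pp g -> loc_kernel I pp (qmul a g).
Proof.
move=> [s [ns sg]]; exists s; split=> //; apply: (I_qeq _ (I_mul a sg)).
apply: qeq_trans (qeq_sym (qmulA _ _ _)) _.
by apply: qeq_trans (qmul_qeql _ (qmulC _ _)) _; exact: qmulA.
Qed.

Lemma kernel_cat g1 g2 :
  loc_kernel I pp g1 -> loc_kernel I pp g2 -> loc_kernel I pp (g1 ++ g2).
Proof.
move=> [s1 [ns1 sg1]] [s2 [ns2 sg2]]; exists (qmul s1 s2).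
split; first exact: notin_prime_mul.
have : I (qmul s2 (qmul s1 g1) ++ qmul s1 (qmul s2 g2)) by apply: I_cat; apply: I_mul.
apply: I_qeq; apply: qeq_sym; apply: qeq_trans (qmul_catr _ _ _) _.
apply: qeq_cat; last exact: qmulA.
by apply: qeq_trans (qmul_qeql _ (qmulC _ _)) _; exact: qmulA.
Qed.

Lemma kernel_flatten (L : seq (mpoly k Q)) :
  (forall g, List.In g L -> loc_kernel I pp g) -> loc_kernel I pp (flatten L).
Proof.
elim: L => [|g L IH] h /=; first exact: (kernel_I I_nil).
by apply: kernel_cat; [apply: h; left|apply: IH => x xL; apply: h; right].
Qed.

Lemma kernel_gen (S : mpoly k Q -> Prop) f : (forall s, S s -> loc_kernel I pp s) ->
  gen_ideal (@eq Q) (@GRing.add Q) (fun _ => True) S f -> loc_kernel I pp f.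
Proof.
move=> SN [_ [l [gens e]]]; apply: kernel_qeq (qeq_sym e) _.
apply: kernel_flatten => g gl; have [x xl ->] := In_map gl.
apply: kernel_mul; apply: SN.
exact: proj2 (gens x xl).
Qed.

Lemma kernel_kspan (A : Q -> Prop) f : (forall q, A q -> loc_kernel I pp (mono 1 q)) ->
  kspan (@eq Q) A f -> loc_kernel I pp f.
Proof.
move=> AN [l [Al e]]; apply: kernel_qeq (qeq_sym e) _.
elim: l Al {e} => [|[c q] l IH] Al; first exact: (kernel_I I_nil).
have -> : (c, q) :: l = qmul (mono c 0) (mono 1 q) ++ l.
  by rewrite /qmul /pmul /= mulr1 add0r.
apply: kernel_cat; last by apply: IH => y yl; apply: Al; right.
by apply: kernel_mul; apply: AN; exact: Al (c, q) (or_introl erefl).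
Qed.

End LocalizationKernel.
End KQ.

(* Normalizes both sides of an equation in a commutative monoid by pulling
   each summand of the left-hand side to the front of the right-hand side. *)
Ltac ac :=
  rewrite ?addr0 ?add0r -?addrA;
  repeat match goal with
  | |- ?x = ?x => reflexivity
  | |- ?x + ?l = ?x + ?r => apply: (congr1 (fun t => x + t))
  | |- ?x + ?l = ?r => try rewrite [in RHS](addrC _ x); do 12? rewrite [in RHS](addrCA _ x)
  end.

Section Localization.
Variables (k : fieldType) (Q : nmodType) (P : Q -> Prop).
Hypothesis HP : prime_mideal P.

Lemma notP0 : ~ P 0.
Proof. by case: HP => [[q nq] [Pup _]] P0; apply: nq; rewrite -[q]add0r; apply: Pup. Qed.

Lemma notP_add a b : ~ P a -> ~ P b -> ~ P (a + b).
Proof. by move=> na nb /(proj1 (proj2 (proj2 HP))) [/na|/nb]. Qed.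

Lemma P_addr a b : P a -> P (a + b).
Proof. exact: (proj1 (proj2 HP)). Qed.

Lemma locr_refl x : locr P x x.
Proof. by exists 0; split; [exact: notP0|]. Qed.

Lemma locr_sym x y : locr P x y -> locr P y x.
Proof. by move=> [w [nw e]]; exists w; split=> //; rewrite e. Qed.

Lemma locr_trans x y z : ~ P y.2 -> locr P x y -> locr P y z -> locr P x z.
Proof.
move=> ny [w1 [n1 e1]] [w2 [n2 e2]]; exists (y.2 + w1 + w2).
split; first by apply: notP_add => //; apply: notP_add.
have -> : x.1 + z.2 + (y.2 + w1 + w2) = (x.1 + y.2 + w1) + (z.2 + w2) by ac.
rewrite e1.
have -> : y.1 + x.2 + w1 + (z.2 + w2) = (y.1 + z.2 + w2) + (x.2 + w1) by ac.
by rewrite e2; ac.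
Qed.

Lemma locr_addl z x y : locr P x y -> locr P (locadd z x) (locadd z y).
Proof.
move=> [w [nw e]]; exists w; split=> //; rewrite /locadd /=.
have -> : z.1 + x.1 + (z.2 + y.2) + w = (x.1 + y.2 + w) + (z.1 + z.2) by ac.
by rewrite e; ac.
Qed.

Lemma locr_addr z x y : locr P x y -> locr P (locadd x z) (locadd y z).
Proof.
move=> [w [nw e]]; exists w; split=> //; rewrite /locadd /=.
have -> : x.1 + z.1 + (y.2 + z.2) + w = (x.1 + y.2 + w) + (z.1 + z.2) by ac.
by rewrite e; ac.
Qed.

Definition locinv (psi : Q * Q -> k) :=
  forall u v, ~ P u.2 -> ~ P v.2 -> locr P u v -> psi u = psi v.

Lemma ind_locinv m : locinv (ind (locr P) m).
Proof.
move=> u v nu nv uv; rewrite /ind (@cl_iff (locr P u m) (locr P v m)) //.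
by split; [apply: locr_trans nu (locr_sym uv)|apply: locr_trans nv uv].
Qed.

Lemma locinv_translate psi z : ~ P z.2 -> locinv psi ->
  locinv (fun b => psi (locadd z b)).
Proof.
move=> nz psiI u v nu nv uv; apply: psiI; [exact: notP_add|exact: notP_add|].
exact: locr_addl.
Qed.

Lemma locpeq_weigh psi F G : locinv psi -> kQP_dom P F -> kQP_dom P G ->
  peq (locr P) F G -> weigh psi F = weigh psi G.
Proof.
move=> psiI; apply: (peq_weigh (A := fun x => ~ P x.2)) => //.
- exact: locr_refl.
- exact: locr_sym.
- by move=> x y z; apply: locr_trans.
Qed.

Lemma dom_cat (F G : mpoly k (Q * Q)) : kQP_dom P F -> kQP_dom P G -> kQP_dom P (F ++ G).
Proof. by move=> nF nG x /In_cat [/nF|/nG]. Qed.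

Lemma dom_flatten (L : seq (mpoly k (Q * Q))) :
  (forall F, List.In F L -> kQP_dom P F) -> kQP_dom P (flatten L).
Proof. by move=> nL x xL; have [F FL xF] := In_flatten xL; exact: nL F FL x xF. Qed.

Lemma dom_pmul (F G : mpoly k (Q * Q)) : kQP_dom P F -> kQP_dom P G ->
  kQP_dom P (pmul (@locadd Q) F G).
Proof.
move=> nF nG z zFG; have [x [y [xF yG ->]]] := In_pmul zFG.
by apply: notP_add; [apply: nF|apply: nG].
Qed.

Lemma dom_mono (c : k) (z : Q * Q) : ~ P z.2 -> kQP_dom P (mono c z).
Proof. by move=> nz x [<-|[]]. Qed.

(* den U g is the fraction g / t^U in k[Q_P] *)
Definition den (U : Q) (g : mpoly k Q) : mpoly k (Q * Q) :=
  [seq (x.1, (x.2, U)) | x <- g].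

Lemma weigh_den psi U g : weigh psi (den U g) = weigh (fun q => psi (q, U)) g.
Proof. exact: big_map. Qed.

Lemma weigh_den_shift psi U V g : locinv psi -> ~ P U -> ~ P V ->
  weigh psi (den V g) = weigh psi (den (V + U) (qmul (mono 1 U) g)).
Proof.
move=> psiI nU nV; rewrite !weigh_den weigh_monomul.
apply: weigh_ext => y; apply: psiI => //; first exact: notP_add.
by exists 0; split; [exact: notP0|rewrite /=; ac].
Qed.

(* c' / t^V is a termwise rewriting of c over the common denominator t^V *)
Definition over_den (V : Q) (c : mpoly k (Q * Q)) (c' : mpoly k Q) :=
  List.Forall2 (fun x y => [/\ x.1 = y.1, locr P x.2 (y.2, V) & ~ P x.2.2]) c c'.

Lemma common_den (c : mpoly k (Q * Q)) : kQP_dom P c ->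
  exists V c', ~ P V /\ over_den V c c'.
Proof.
elim: c => [|x c IH] nc; first by exists 0, [::]; split; [exact: notP0|constructor].
have [V [c' [nV cc']]] := IH (fun y yc => nc y (or_intror yc)).
have nx : ~ P x.2.2 := nc x (or_introl erefl).
exists (x.2.2 + V), ((x.1, x.2.1 + V) :: [seq (y.1, y.2 + x.2.2) | y <- c']).
split; first exact: notP_add.
constructor; first by split=> //; exists 0; split; [exact: notP0|rewrite /=; ac].
elim: cc' {IH nc} => [|x0 y c0 c0' [e1 [w [nw e]] n0] _ IH] /=; first by constructor.
constructor=> //; split=> //; exists w; split=> //=.
have -> : x0.2.1 + (x.2.2 + V) + w = (x0.2.1 + V + w) + x.2.2 by ac.
by rewrite e /=; ac.
Qed.

Lemma weigh_over_den psi V c c' : locinv psi -> ~ P V -> over_den V c c' ->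
  weigh psi c = weigh (fun q => psi (q, V)) c'.
Proof.
move=> psiI nV; rewrite /over_den => cc'; apply: weigh_Forall2.
by apply: List.Forall2_impl cc' => x y [e1 e2 nx]; split=> //; apply: psiI.
Qed.

Lemma weigh_over_den_mul psi (a : mpoly k (Q * Q)) a' V f : locinv psi -> ~ P V ->
  over_den V a a' ->
  weigh psi (pmul (@locadd Q) a (toP f)) = weigh psi (den V (qmul a' f)).
Proof.
move=> psiI nV aa'; rewrite weigh_pmul weigh_den /qmul weigh_pmul.
apply: weigh_Forall2; apply: List.Forall2_impl aa' => x y [e1 e2 nx].
split=> //; rewrite (_ : toP f = den 0 f) // weigh_den; apply: weigh_ext => z.
apply: psiI => /=; [apply: notP_add => //; exact: notP0|by []|].
by have := locr_addr (z, 0) e2; rewrite {2}/locadd /= addr0.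
Qed.

Lemma IP_fraction (I : mpoly k Q -> Prop) : binomial_ideal I -> forall F, IP I P F ->
  exists U g, [/\ ~ P U, I g & peq (locr P) F (den U g)].
Proof.
move=> HI F [_ [l [gens e]]].
suff [U [g [nU Ig e']]] : exists U g, [/\ ~ P U, I g &
    peq (locr P) (flatten [seq pmul (@locadd Q) x.1 x.2 | x <- l]) (den U g)].
  by exists U, g; split=> // m; rewrite e e'.
elim: l gens {e} => [|[a b] l IH] gens.
  by exists 0, [::]; split; [exact: notP0|exact: I_nil HI|].
have [/= na [f [If eb]]] := gens (a, b) (or_introl erefl); rewrite /= in eb; subst b.
have [U [g [nU Ig e1]]] := IH (fun y yl => gens y (or_intror yl)).
have [V [a' [nV aa']]] := common_den na.
exists (V + U), (qmul (mono 1 U) (qmul a' f) ++ qmul (mono 1 V) g).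
split; [exact: notP_add|by apply: (I_cat HI); do ! apply: (I_mul HI)|].
move=> m; rewrite /= !coef_weigh weigh_cat /den map_cat -!/(den _ _) weigh_cat.
rewrite (weigh_over_den_mul f (ind_locinv m) nV aa').
rewrite -(weigh_den_shift (qmul a' f) (ind_locinv m) nU nV); congr (_ + _).
by rewrite -coef_weigh e1 coef_weigh addrC (weigh_den_shift g (ind_locinv m) nV nU).
Qed.

End Localization.

(* Equality of fractions over a common denominator in k[Q_P] lifts to k[Q]
   after multiplication by a monomial t^w, w outside P.  The key point is
   that the formal sums in k[Q] whose coefficient sums over every class of
   "a + w = b + w for some w outside P" vanish are killed by such a t^w. *)
Section Cancellation.
Variables (k : fieldType) (Q : nmodType) (P : Q -> Prop).
Hypothesis HP : prime_mideal P.

Definition locequiv (a b : Q) := exists w, ~ P w /\ a + w = b + w.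

Lemma locequiv_refl a : locequiv a a.
Proof. by exists 0; split; [exact: notP0|]. Qed.

Lemma locequiv_sym a b : locequiv a b -> locequiv b a.
Proof. by move=> [w [nw e]]; exists w. Qed.

Lemma locequiv_trans a b c : locequiv a b -> locequiv b c -> locequiv a c.
Proof.
move=> [w1 [n1 e1]] [w2 [n2 e2]]; exists (w1 + w2); split; first exact: notP_add.
by rewrite !addrA e1 addrAC e2 addrAC.
Qed.

Lemma class_translate (a : Q) (L : mpoly k Q) :
  (forall x, List.In x L -> locequiv x.2 a) ->
  exists W, ~ P W /\ forall x, List.In x L -> x.2 + W = a + W.
Proof.
elim: L => [|x L IH] h; first by exists 0; split; [exact: notP0|].
have [W [nW eL]] := IH (fun y yL => h y (or_intror yL)).
have [w [nw e]] := h x (or_introl erefl).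
exists (w + W); split; first exact: notP_add.
by move=> y [<-|yL]; [rewrite addrA e addrA|rewrite addrCA eL // addrCA].
Qed.

Definition in_class (a : Q) : pred (k * Q) := fun y => cl (locequiv y.2 a).

Lemma class_split (D : mpoly k Q) a :
  (forall a', weigh (ind locequiv a') D = 0) ->
  weigh (fun _ => 1) (filter (in_class a) D) = 0 /\
  forall a', weigh (ind locequiv a') (filter (predC (in_class a)) D) = 0.
Proof.
move=> D0; set C := filter _ D; set R := filter _ D.
have inC y : List.In y C -> locequiv y.2 a.
  by move=> yC; have [_ /clP] := In_filter yC.
have notinC y : List.In y R -> ~ locequiv y.2 a.
  by move=> yR ya; have [_] := In_filter yR; rewrite /= /in_class clT.
have C0 : weigh (fun _ => 1) C = 0.
  have := D0 a; rewrite (weigh_filter _ (in_class a)) -/C -/R.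
  rewrite (@weigh_on _ _ _ (fun _ => 1) C); last by move=> y /inC ya; rewrite /ind clT.
  rewrite (@weigh_on _ _ _ (fun _ => 0) R) ?weigh_zero ?addr0 //.
  by move=> y yR; rewrite /ind clF //; exact: notinC.
split=> // a'; have := D0 a'; rewrite (weigh_filter _ (in_class a)) -/C -/R.
rewrite (@weigh_on _ _ _ (fun _ => ind locequiv a' a) C).
  by rewrite weigh_const C0 mulr0 add0r.
move=> y /inC ya; rewrite /ind; congr (if _ then _ else _); apply: cl_iff.
split; [exact: locequiv_trans (locequiv_sym ya)|exact: locequiv_trans ya].
Qed.

Lemma class_sums_cancel n (D : mpoly k Q) : (size D <= n)%N ->
  (forall a, weigh (ind locequiv a) D = 0) ->
  exists w, ~ P w /\ forall v b, weigh (fun q => ind eq b (q + w + v)) D = 0.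
Proof.
have cancel_nil : exists w, ~ P w /\
    forall v b, weigh (fun q => ind eq b (q + w + v)) ([::] : mpoly k Q) = 0.
  by exists 0; split=> [|v b]; [exact: notP0|exact: weigh_nil].
elim: n D => [|n IH] [|x D'] sD D0 //.
set a := x.2; set D := x :: D'.
have [C0 R0] := class_split a D0.
have sR : (size (filter (predC (in_class a)) D) <= n)%N.
  have xa : in_class a x by apply/clP; exact: locequiv_refl.
  rewrite /D /= xa /= size_filter.
  by apply: leq_trans (count_size _ _) _; rewrite -ltnS.
have [wR [nwR R0']] := IH _ sR R0.
have [W [nW eW]] := @class_translate a (filter (in_class a) D)
  (fun y yC => proj1 (clP _) (proj2 (In_filter yC))).
exists (W + wR); split; first exact: notP_add.
move=> v b; rewrite (weigh_filter _ (in_class a)).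
rewrite (@weigh_on _ _ _ (fun _ => ind eq b (a + (W + wR) + v))); last first.
  by move=> y yC; rewrite !addrA eW.
rewrite weigh_const C0 mulr0 add0r -[RHS](R0' (W + v) b); apply: weigh_ext => q.
by rewrite [W + wR]addrC !addrA.
Qed.

Lemma locr_den W q a : ~ P W -> (locr P (q, W) (a, W) <-> locequiv q a).
Proof.
move=> nW; split=> [[w [nw e]]|[w [nw e]]].
  by exists (W + w); split; [exact: notP_add|rewrite !addrA].
by exists w; split=> //=; rewrite addrAC e addrAC.
Qed.

Lemma den_eq U V (h g : mpoly k Q) : ~ P U -> ~ P V ->
  peq (locr P) (den V h) (den U g) ->
  exists w, ~ P w /\ qeq (qmul (mono 1 w) (qmul (mono 1 U) h))
                         (qmul (mono 1 w) (qmul (mono 1 V) g)).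
Proof.
move=> nU nV hg; set h' := qmul (mono 1 U) h; set g' := qmul (mono 1 V) g.
have nVU : ~ P (V + U) by exact: notP_add.
have e m : weigh (ind (locr P) m) (den (V + U) h') =
           weigh (ind (locr P) m) (den (V + U) g').
  rewrite -(weigh_den_shift HP h (ind_locinv k HP m) nU nV) [V + U]addrC.
  by rewrite -(weigh_den_shift HP g (ind_locinv k HP m) nV nU) -!coef_weigh hg.
pose D := h' ++ [seq (- x.1, x.2) | x <- g'].
have [w [nw D0]] : exists w, ~ P w /\
    forall v b, weigh (fun q => ind eq b (q + w + v)) D = 0.
  apply: (@class_sums_cancel (size D) D (leqnn _)) => a.
  rewrite /D weigh_cat weigh_neg; apply/eqP; rewrite subr_eq0; apply/eqP.
  have := e (a, V + U); rewrite !weigh_den.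
  have ind_eq : (fun q => ind (locr P) (a, V + U) (q, V + U)) =1 (ind locequiv a : Q -> k).
    by move=> q; rewrite /ind (cl_iff (locr_den q a nVU)).
  by rewrite !(weigh_ext _ ind_eq).
exists w; split=> // b; rewrite !coef_weigh (weigh_monomul _ w h') (weigh_monomul _ w g').
have := D0 0 b; rewrite /D weigh_cat weigh_neg => /eqP; rewrite subr_eq0 => /eqP.
have shift : (fun q => ind eq b (q + w + 0)) =1 (fun q => ind eq b (w + q) : k).
  by move=> q; rewrite addr0 addrC.
by rewrite !(weigh_ext _ shift).
Qed.

End Cancellation.

(* It vanishes on
   I_sigma + m_P (even after multiplication by elements of k[Q_P]), which
   gives a practical criterion for non-membership in pp = I_{sigma,P}. *)
Section CharacterWeight.
Variables (k : fieldType) (Q : nmodType) (P : Q -> Prop).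
Variables (K : Q * Q -> Prop) (sigma : Q * Q -> k).
Hypothesis HP : prime_mideal P.
Hypothesis Hc : is_character P K sigma.

Let K_GP g : K g -> GP P g. Proof. exact: (proj1 Hc). Qed.
Let K_locr g h : K g -> ~ P h.2 -> locr P g h -> K h /\ sigma g = sigma h.
Proof. exact: (proj1 (proj2 Hc)). Qed.
Let K00 : K (0, 0). Proof. exact: (proj1 (proj2 (proj2 Hc))). Qed.
Let K_add g h : K g -> K h -> K (locadd g h).
Proof. exact: (proj1 (proj2 (proj2 (proj2 Hc)))). Qed.
Let K_opp g : K g -> K (g.2, g.1).
Proof. exact: (proj1 (proj2 (proj2 (proj2 (proj2 Hc))))). Qed.
Let sigma_neq0 g : K g -> sigma g != 0.
Proof. exact: (proj1 (proj2 (proj2 (proj2 (proj2 (proj2 Hc)))))). Qed.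
Let sigma_mul g h : K g -> K h -> sigma (locadd g h) = sigma g * sigma h.
Proof. exact: (proj2 (proj2 (proj2 (proj2 (proj2 (proj2 Hc)))))). Qed.

(* elements of K are units of Q_P, so their numerators avoid P as well *)
Lemma K_num_notP g : K g -> ~ P g.1.
Proof.
move=> /K_GP [ng2 [h [nh2 [w [nw e]]]]] Pg1.
have : P (g.1 + h.1 + 0 + w) by do 3 apply: (P_addr HP).
rewrite /= in e; rewrite e; apply: (notP_add HP) => //.
by apply: (notP_add HP); [exact: notP0|exact: notP_add].
Qed.

Definition psi0 (y : Q * Q) : k := if cl (K y) then sigma y else 0.

Lemma psi0_locinv : locinv P psi0.
Proof.
move=> u v nu nv uv; rewrite /psi0; case: (classic (K u)) => Ku.
  by have [Kv ->] := K_locr Ku nv uv; rewrite !clT.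
by rewrite !clF // => Kv; apply: Ku; exact: proj1 (K_locr Kv nu (locr_sym uv)).
Qed.

Lemma psi0_00 : psi0 (0, 0) = 1.
Proof.
rewrite /psi0 clT //; apply: (mulfI (sigma_neq0 K00)).
by rewrite mulr1 -sigma_mul //= /locadd /= addr0.
Qed.

Lemma psi0_uu u : ~ P u -> psi0 (u, u) = 1.
Proof.
move=> nu; rewrite -psi0_00; apply: psi0_locinv => //=; first exact: notP0.
by exists 0; split; [exact: notP0|rewrite /=; ac].
Qed.

Lemma psi0_P g : P g.1 -> psi0 g = 0.
Proof. by move=> Pg; rewrite /psi0 clF // => /K_num_notP. Qed.

Lemma psi0_translate x h v : ~ P x.2 -> K h -> ~ P v.2 ->
  psi0 (locadd x (locadd h v)) = sigma h * psi0 (locadd x v).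
Proof.
move=> nx Kh nv; rewrite /psi0.
have nxv : ~ P (locadd x v).2 by exact: notP_add.
have nxhv : ~ P (locadd x (locadd h v)).2.
  by apply: (notP_add HP) => //; apply: (notP_add HP) => //; exact: proj1 (K_GP Kh).
case: (classic (K (locadd x v))) => Kxv.
  have hxv : locr P (locadd h (locadd x v)) (locadd x (locadd h v)).
    by exists 0; split; [exact: notP0|rewrite /locadd /=; ac].
  have [Kxhv <-] := K_locr (K_add Kh Kxv) nxhv hxv.
  by rewrite !clT // sigma_mul.
rewrite !clF ?mulr0 // => Kxhv; apply: Kxv.
apply: (proj1 (K_locr (K_add (K_opp Kh) Kxhv) nxv _)).
by exists 0; split; [exact: notP0|rewrite /locadd /=; ac].
Qed.

Lemma weigh_psi0_binom g r : ~ P g.2 -> r != 0 -> ~ (K g /\ r = sigma g) ->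
  weigh psi0 (binom (locadd g (0, 0)) (0, 0) r) != 0.
Proof.
move=> ng nr gr; rewrite /binom !weigh_cons weigh_nil addr0 mul1r psi0_00 mulr1.
rewrite (@psi0_locinv (locadd g (0, 0)) g) /=; first last.
- by exists 0; split; [exact: notP0|rewrite /locadd /=; ac].
- by [].
- by rewrite addr0.
rewrite /psi0; case: (classic (K g)) => Kg; last by rewrite clF // add0r oppr_eq0.
by rewrite clT // subr_eq0; apply/eqP => e; apply: gr.
Qed.

(* F lies in the largest ideal of k[Q_P] on which psi0 vanishes *)
Definition annihilated (F : mpoly k (Q * Q)) :=
  forall a, kQP_dom P a -> weigh psi0 (pmul (@locadd Q) a F) = 0.

Lemma annihilated_peq F F' : kQP_dom P F -> kQP_dom P F' -> peq (locr P) F F' ->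
  annihilated F -> annihilated F'.
Proof.
move=> nF nF' FF' AF a na.
have swap G : weigh psi0 (pmul (@locadd Q) a G) =
              weigh (fun b => weigh (fun x => psi0 (locadd x b)) a) G.
  by rewrite weigh_pmul (weigh_exch (fun x b => psi0 (locadd x b))).
rewrite swap -(locpeq_weigh _ _ nF nF' FF') -?swap ?AF //.
move=> x y nx ny xy; apply: weigh_on => z za; apply: psi0_locinv.
- by apply: (notP_add HP) => //; exact: na.
- by apply: (notP_add HP) => //; exact: na.
exact: locr_addl.
Qed.

Lemma annihilated_cat F G : annihilated F -> annihilated G -> annihilated (F ++ G).
Proof. by move=> AF AG a na; rewrite weigh_pmul_catr AF ?AG ?addr0. Qed.

Lemma annihilated_flatten (L : seq (mpoly k (Q * Q))) :
  (forall F, List.In F L -> annihilated F) -> annihilated (flatten L).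
Proof.
elim: L => [|F L IH] AL /=.
  move=> a na; rewrite weigh_pmul -[RHS](weigh_zero a).
  by apply: weigh_ext => x; exact: weigh_nil.
by apply: annihilated_cat; [apply: AL; left|apply: IH => G GL; apply: AL; right].
Qed.

Lemma annihilated_mul b F : kQP_dom P b -> annihilated F ->
  annihilated (pmul (@locadd Q) b F).
Proof.
move=> nb AF a na; rewrite -weigh_pmulA; last by move=> x y z; rewrite /locadd /= !addrA.
by apply: AF; exact: dom_pmul.
Qed.

Lemma annihilated_ideal (S : mpoly k (Q * Q) -> Prop) F :
  (forall s, S s -> kQP_dom P s /\ annihilated s) ->
  gen_ideal (locr P) (@locadd Q) (kQP_dom P) S F -> annihilated F.
Proof.
move=> AS [nF [l [gens e]]].
have nl : kQP_dom P (flatten [seq pmul (@locadd Q) x.1 x.2 | x <- l]).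
  apply: dom_flatten => G Gl; have [x xl ->] := In_map Gl.
  have [nx1 Sx2] := gens x xl; apply: dom_pmul => //; exact: proj1 (AS _ Sx2).
apply: (annihilated_peq nl nF); first by move=> m; rewrite e.
apply: annihilated_flatten => G Gl; have [x xl ->] := In_map Gl.
have [nx1 Sx2] := gens x xl; apply: annihilated_mul => //; exact: proj2 (AS _ Sx2).
Qed.

Lemma annihilated_Irho_gen s :
  (exists h v, K h /\ ~ P v.2 /\ s = binom (locadd h v) v (sigma h)) ->
  kQP_dom P s /\ annihilated s.
Proof.
move=> [h [v [Kh [nv ->]]]]; split.
  move=> x [<-|[<-|[]]] //=; apply: (notP_add HP) => //; exact: proj1 (K_GP Kh).
move=> a na; rewrite weigh_pmul -[RHS](weigh_zero a); apply: weigh_on => x xa.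
rewrite /binom !weigh_cons weigh_nil /= psi0_translate //; last exact: na.
by rewrite mul1r addr0 mulNr subrr.
Qed.

Lemma annihilated_mP_gen s : (exists a u, P a /\ ~ P u /\ s = mono 1 (a, u)) ->
  kQP_dom P s /\ annihilated s.
Proof.
move=> [a0 [u [Pa0 [nu ->]]]]; split; first exact: dom_mono.
move=> a na; rewrite weigh_pmul -[RHS](weigh_zero a); apply: weigh_on => x xa.
by rewrite weigh_mono psi0_P ?mulr0 //= addrC; exact: P_addr.
Qed.

Lemma annihilated_Isigma_mP F :
  locsum P (Irho P K sigma) (mP P) F -> annihilated F.
Proof.
move=> [nF [f1 [f2 [I1 [m2 e]]]]].
have A12 : annihilated (f1 ++ f2).
  apply: annihilated_cat; first exact: annihilated_ideal annihilated_Irho_gen I1.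
  exact: annihilated_ideal annihilated_mP_gen m2.
apply: (annihilated_peq _ nF _ A12).
  by apply: dom_cat; [exact: proj1 I1|exact: proj1 m2].
by move=> m; rewrite e.
Qed.

Lemma annihilated_weigh F : annihilated F -> weigh psi0 F = 0.
Proof.
move=> AF; rewrite -[RHS](AF (mono 1 (0, 0))); last by apply: dom_mono; exact: notP0.
rewrite weigh_pmul weigh_mono mul1r; apply: weigh_ext => y.
by rewrite /locadd /= !add0r -surjective_pairing.
Qed.

Lemma IsigP_weigh V c : ~ P V -> IsigP P K sigma c ->
  weigh (fun q => psi0 (q, V)) c = 0.
Proof.
move=> nV /annihilated_Isigma_mP Ac.
rewrite -[RHS](Ac (mono 1 (0, V))); last exact: dom_mono.
rewrite weigh_pmul weigh_mono mul1r (_ : toP c = den 0 c) // weigh_den.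
by apply: weigh_ext => q; rewrite /locadd /= add0r addr0.
Qed.

Lemma notin_IsigP_mono u : ~ P u -> ~ IsigP P K sigma (mono 1 u).
Proof.
by move=> nu /(IsigP_weigh nu) /eqP; rewrite weigh_mono mul1r psi0_uu // oner_eq0.
Qed.

Lemma notin_IsigP_binom p w c : P p -> ~ P w -> c != 0 ->
  ~ IsigP P K sigma (binom (p + w) w c).
Proof.
move=> Pp nw nc /(IsigP_weigh nw) /eqP.
rewrite /binom !weigh_cons weigh_nil /= psi0_uu // psi0_P /=; last exact: P_addr.
by rewrite mulr0 add0r addr0 mulr1 oppr_eq0 (negbTE nc).
Qed.

Lemma notin_IsigP_over_den (c : mpoly k (Q * Q)) c' V : ~ P V ->
  over_den P V c c' -> weigh psi0 c != 0 -> ~ IsigP P K sigma c'.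
Proof.
move=> nV cc' nc /(IsigP_weigh nV) c'0; move: nc.
by rewrite (weigh_over_den psi0_locinv nV cc') c'0 eqxx.
Qed.

End CharacterWeight.

Lemma not_restricts_witness (Q : nmodType) (k : fieldType) (K K' : Q * Q -> Prop)
  (sigma rho : Q * Q -> k) :
  ~ restricts K sigma K' rho -> exists g, K' g /\ ~ (K g /\ rho g = sigma g).
Proof.
move=> nr; apply: NNPP => nex; apply: nr; split=> g K'g;
  by apply: NNPP => ng; apply: nex; exists g; split=> // [[]].
Qed.

Section Generators.
Variables (k : fieldType) (Q : nmodType).
Variables (I : mpoly k Q -> Prop) (P : Q -> Prop).
Variables (K : Q * Q -> Prop) (sigma : Q * Q -> k).
Hypothesis HI : binomial_ideal I.
Hypothesis HP : prime_mideal P.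
Hypothesis Hc : is_character P K sigma.
Hypothesis Hpp : prime_ideal (IsigP P K sigma).

Let pp := IsigP P K sigma.

(* t^q with q + p ~ q in the localization: t^(p+w) - c t^w kills t^q mod I *)
Lemma kernel_Minf_gen g :
  (exists q p, P p /\ barr I P (q + p, 0) (q, 0) /\ g = mono 1 q) ->
  loc_kernel I pp g.
Proof.
move=> [q [p [Pp [[w [nw [c [nc Ibin]]]] ->]]]].
exists (binom (p + w) w c); split; first exact: notin_IsigP_binom.
have -> : qmul (binom (p + w) w c) (mono 1 q) = binom (q + p + 0 + w) (q + 0 + w) c.
  by rewrite /qmul /pmul /binom /mono /= !mulr1; congr [:: (_, _); (_, _)]; ac.
exact: Ibin.
Qed.

(* If c lies in (I_P : t^q) and psi0 c is nonzero, then t^q is in N: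
   with c = c'/t^V and t^q c = g/t^U (g in I), t^(w+U) c' t^q lies in I. *)
Lemma kernel_colon q c : colon P (IP I P) q c -> weigh (psi0 K sigma) c != 0 ->
  loc_kernel I pp (mono 1 q).
Proof.
move=> [nc Iqc] psic.
have [V [c' [nV cc']]] := common_den HP nc.
have nc' : ~ pp c' := notin_IsigP_over_den HP Hc nV cc' psic.
have [U [g [nU Ig qc_g]]] := IP_fraction HP HI Iqc.
have qc'_g : peq (locr P) (den V (qmul (mono 1 q) c')) (den U g).
  move=> m; rewrite -qc_g !coef_weigh weigh_pmul weigh_mono mul1r weigh_den.
  have psiI := locinv_translate HP (notP0 HP : ~ P (q, 0).2) (ind_locinv k HP m).
  rewrite (weigh_over_den psiI nV cc') weigh_pmul weigh_mono mul1r.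
  by apply: weigh_ext => y; rewrite /locadd /= add0r.
have [w [nw e]] := den_eq HP nU nV qc'_g.
exists (qmul (mono 1 (w + U)) c'); split.
  by apply: (notin_prime_mul Hpp) => //; apply: (notin_IsigP_mono HP Hc); exact: notP_add.
have : I (qmul (mono 1 w) (qmul (mono 1 V) g)) by do 2 apply: (I_mul HI).
apply: (I_qeq HI); apply: qeq_trans (qeq_sym e) _; apply: qeqP => psi.
rewrite (qeq_weigh (qmulC _ (mono 1 q))) !weigh_monomul.
by apply: weigh_ext => y; congr psi; ac.
Qed.

Lemma binom_in_Irho q (rho : Q * Q -> k) g : Kq I P q g ->
  locsum P (Irho P (Kq I P q) rho) (mP P) (binom (locadd g (0, 0)) (0, 0) (rho g)).
Proof.
move=> Kg; have ng : ~ P g.2 := proj1 (proj1 Kg).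
have nb : kQP_dom P (binom (locadd g (0, 0)) (0, 0) (rho g)).
  move=> x [<-|[<-|[]]] /=; last exact: notP0 HP.
  by rewrite addr0.
split=> //; exists (binom (locadd g (0, 0)) (0, 0) (rho g)), [::]; split.
  split=> //; exists [:: (mono 1 (0, 0), binom (locadd g (0, 0)) (0, 0) (rho g))].
  split.
    move=> x [<-|[]]; split; first by apply: dom_mono; exact: notP0 HP.
    by exists g, (0, 0); split=> //; split; [exact: notP0 HP|].
  move=> m; rewrite !coef_weigh weigh_flatten big_seq1 weigh_pmul weigh_mono mul1r.
  by apply: weigh_ext => y; rewrite /locadd /= !add0r -surjective_pairing.
split; first by split; [move=> x []|exists [::]].
by move=> m; rewrite cats0.
Qed.

Lemma kernel_Msig_mono q : (IP I P (mono 1 (q, 0)) \/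
      (~ IP I P (mono 1 (q, 0)) /\
       exists rho, char_at I P q rho /\ ~ restricts K sigma (Kq I P q) rho)) ->
  loc_kernel I pp (mono 1 q).
Proof.
case=> [Iq|[_ [rho [[rho_char rho_colon] not_restr]]]].
  apply: (@kernel_colon q (mono 1 (0, 0))); first split.
  - by apply: dom_mono; exact: notP0 HP.
  - by rewrite /pmul /= mulr1 /locadd /= !addr0.
  by rewrite weigh_mono mul1r (psi0_00 Hc) oner_eq0.
have [g [Kqg not_sigma]] := not_restricts_witness not_restr.
have ng : ~ P g.2 := proj1 (proj1 Kqg).
set b := binom (locadd g (0, 0)) (0, 0) (rho g).
have nb : kQP_dom P b by case: (binom_in_Irho rho Kqg).
have [_ [c [m [colon_c [mP_m e]]]]] := proj2 (rho_colon b nb) (binom_in_Irho rho Kqg).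
apply: (kernel_colon colon_c).
(* characters take values in k^* *)
have rho_neq0 : rho g != 0 := proj1 (proj2 (proj2 (proj2 (proj2 (proj2 rho_char))))) g Kqg.
have := weigh_psi0_binom HP Hc ng rho_neq0 not_sigma.
have Am : annihilated P K sigma m.
  by apply: annihilated_ideal mP_m => //; exact: annihilated_mP_gen.
have ncm : kQP_dom P (c ++ m) by apply: dom_cat; [exact: proj1 colon_c|exact: proj1 mP_m].
rewrite -/b (locpeq_weigh HP (psi0_locinv Hc) nb ncm e) weigh_cat.
by rewrite (annihilated_weigh HP Am) addr0.
Qed.

End Generators.

Theorem theorem14p9 (k : fieldType) (Q : nmodType)
  (I : mpoly k Q -> Prop) (P : Q -> Prop)
  (K : Q * Q -> Prop) (sigma : Q * Q -> k) :
  fin_gen Q ->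
  binomial_ideal I ->
  prime_mideal P ->
  is_character P K sigma ->
  prime_ideal (IsigP P K sigma) ->
  forall f : mpoly k Q, binloc I P K sigma f -> loc_kernel I (IsigP P K sigma) f.
Proof.
move=> _ HI HP Hc Hpp f [f1 [f2 [f3 [If1 [Minf_f2 [Msig_f3 e]]]]]].
apply: (kernel_qeq HI (qeq_sym e)).
apply: (kernel_cat HI Hpp); first exact: kernel_I.
apply: (kernel_cat HI Hpp).
  by apply: (kernel_gen HI Hpp _ Minf_f2) => g; exact: kernel_Minf_gen.
by apply: (kernel_kspan HI Hpp _ Msig_f3) => q; exact: kernel_Msig_mono.
Qed.
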